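(* Let $(S,\cdot)$ be a discrete semigroup and let $\mathcal{F}$ be a filter on $S$ such that $\overline{\mathcal{F}}=\bigcap_{F\in\mathcal{F}}\overline{F}\subseteq\beta S$ is a (closed) subsemigroup of $\beta S$. Let $B\subseteq S$. Then $B$ is $\mathcal{F}$-central if and only if there exist a dynamical system $(X,\langle T_s\rangle_{s\in S})$, points $x,y\in X$ and a neighbourhood $U$ of $y$ such that $x$ and $y$ are $\mathcal{F}$-proximal, $y$ is $\mathcal{F}$-uniformly recurrent, and $B=\{s\in S: T_s(x)\in U\}$.
   Context: $\beta S$ is the Stone–Čech compactification of the discrete semigroup $S$ (the space of ultrafilters on $S$), with the operation extended so that $(\beta S,\cdot)$ is a compact right topological semigroup; $A\in p\cdot q$ iff $\{x\in S: x^{-1}A\in q\}\in p$, where $x^{-1}A=\{y\in S: xy\in A\}$. For a filter $\mathcal{F}$ on $S$, $\overline{\mathcal{F}}=\bigcap_{F\in\mathcal{F}}\overline{F}$ is the set of ultrafilters containing $\mathcal{F}$. For a compact Hausdorff right topological semigroup $T$, $K(T)$ denotes its smallest two-sided ideal. A set $C\subseteq S$ is $\mathcal{F}$-central if there is an idempotent $p\in K(\overline{\mathcal{F}})$ with $C\in p$. A dynamical system $(X,\langle T_s\rangle_{s\in S})$ consists of a compact (Hausdorff) space $X$ and continuous maps $T_s:X\to X$ with $T_s\circ T_t=T_{st}$ for all $s,t\in S$. A set $A\subseteq S$ is $\mathcal{F}$-syndetic if for every $F\in\mathcal{F}$ there is a finite $G\subseteq F$ with $G^{-1}A=\bigcup_{t\in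 G}t^{-1}A\in\mathcal{F}$. A point $x\in X$ is $\mathcal{F}$-uniformly recurrent if for every neighbourhood $U$ of $x$, $\{s\in S: T_s(x)\in U\}$ is $\mathcal{F}$-syndetic. Points $x,y\in X$ are $\mathcal{F}$-proximal if for every neighbourhood $U$ of the diagonal in $X\times X$ and every $F\in\mathcal{F}$ there is $s\in F$ with $(T_s(x),T_s(y))\in U$. *)

From HB Require Import structures.
From mathcomp Require Import all_boot all_order.
From mathcomp Require Import all_classical all_reals topology.
Set Implicit Arguments. Unset Strict Implicit. Unset Printing Implicit Defensive.
Local Open Scope classical_set_scope.

Section Defs.
Variables (S : Type) (op : S -> S -> S).

Definition is_filter (F : set (set S)) : Prop :=
  [/\ F setT, ~ F set0,
      (forall A B, F A -> F B -> F (A `&` B)) &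
      (forall A B, A `<=` B -> F A -> F B)].

Definition is_ultrafilter (p : set (set S)) : Prop :=
  is_filter p /\ (forall A, p A \/ p (~` A)).

Definition linv (x : S) (A : set S) : set S := [set y | A (op x y)].

(** The extended operation on beta S: A in p.q iff {x | x^{-1}A in q} in p. *)
Definition uprod (p q : set (set S)) : set (set S) :=
  [set A | p [set x | q (linv x A)]].

(** closure of F : the ultrafilters containing the filter F *)
Definition Fbar (F : set (set S)) (p : set (set S)) : Prop :=
  is_ultrafilter p /\ F `<=` p.

Definition Fbar_subsemigroup (F : set (set S)) : Prop :=
  forall p q, Fbar F p -> Fbar F q -> Fbar F (uprod p q).

Definition Fbar_ideal (F : set (set S)) (I : set (set (set S))) : Prop :=
  [/\ I `<=` Fbar F, I !=set0,
      (forall p q, Fbar F p -> I q -> I (uprod p q)) &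
      (forall p q, I p -> Fbar F q -> I (uprod p q))].

Definition in_K_Fbar (F : set (set S)) (p : set (set S)) : Prop :=
  forall I, Fbar_ideal F I -> I p.

Definition F_central (F : set (set S)) (C : set S) : Prop :=
  exists p, [/\ Fbar F p, in_K_Fbar F p, uprod p p = p & p C].

Definition setlinv (G A : set S) : set S := [set y | exists2 t, G t & A (op t y)].

Definition F_syndetic (F : set (set S)) (A : set S) : Prop :=
  forall E, F E -> exists G : set S, [/\ finite_set G, G `<=` E & F (setlinv G A)].

Definition dynamical_system (X : topologicalType) (T : S -> X -> X) : Prop :=
  [/\ compact [set: X], hausdorff_space X,
      (forall s, continuous (T s)) &
      (forall s t, T s \o T t = T (op s t))].

Definition F_uniformly_recurrent (F : set (set S)) (X : topologicalType)
    (T : S -> X -> X) (x : X) : Prop :=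
  forall U, nbhs x U -> F_syndetic F [set s | U (T s x)].

Definition diag_nbhs (X : topologicalType) (U : set (X * X)) : Prop :=
  exists V : set (X * X), [/\ open V, (forall z : X, V (z, z)) & V `<=` U].

Definition F_proximal (F : set (set S)) (X : topologicalType)
    (T : S -> X -> X) (x y : X) : Prop :=
  forall U E, diag_nbhs U -> F E -> exists2 s, E s & U (T s x, T s y).

End Defs.

From HB Require Import structures.
From mathcomp Require Import all_boot all_order.
From mathcomp Require Import all_classical all_reals topology.
Local Open Scope classical_set_scope.

Set Implicit Arguments. Unset Strict Implicit. Unset Printing Implicit Defensive.

(* Closed subsets of beta S are represented by filters: a filter [H] stands for
   [Fbar H], and enlarging the filter shrinks the closed set.  Zorn's lemma on
   filters therefore yields minimal closed subsemigroups, which consist of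
   idempotents (Ellis), and minimal left ideals of [Fbar F], which lie in K.
   If [B] belongs to an idempotent [p] of K, take the shift on the subsets of
   S with an identity adjoined, [x] the indicator of [B] and [y] the [p]-limit
   of the orbit of [x]: idempotency makes [y] its own [p]-limit, which gives
   proximality, and [p] in K gives uniform recurrence of [y].  Conversely,
   proximality yields [p] in [Fbar F] sending [x] and [y] to a common limit;
   in a minimal left ideal inside [Fbar F * p] the ultrafilters fixing [y] form
   a closed subsemigroup, nonempty by uniform recurrence, and an idempotent
   [u = w p] of it sends [x] where it sends [y], namely to [y], so
   [{s | T s x \in U}] belongs to [u]. *)

Section Filters.
Variable S : Type.
Implicit Types (G H p q r : set (set S)) (A B Z : set S).

Lemma is_filterT G : is_filter G -> G setT. Proof. by case. Qed.

Lemma is_filter_neq0 G : is_filter G -> ~ G set0. Proof. by case. Qed.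

Lemma is_filterI G A B : is_filter G -> G A -> G B -> G (A `&` B).
Proof. by case=> _ _ GI _; apply: GI. Qed.

Lemma is_filterS G A B : is_filter G -> A `<=` B -> G A -> G B.
Proof. by case=> _ _ _ GS; apply: GS. Qed.

Lemma is_filter_meet G A B : is_filter G -> G A -> G B -> A `&` B !=set0.
Proof.
move=> hG GA GB; apply/set0P/negP => /eqP AB0.
by apply: (is_filter_neq0 hG); rewrite -AB0; apply: is_filterI.
Qed.

Lemma is_filter_proper G : is_filter G -> ProperFilter G.
Proof.
move=> hG; constructor; first exact: is_filter_neq0.
constructor; first exact: is_filterT.
- by move=> A B; apply: is_filterI.
- by move=> A B; apply: is_filterS.
Qed.

Lemma ultrafilter_filter p : is_ultrafilter p -> is_filter p. Proof. by case. Qed.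

Lemma ultrafilterC p A : is_ultrafilter p -> p (~` A) <-> ~ p A.
Proof.
move=> [hp pA]; split; last by case: (pA A).
move=> pnA pA'; apply: (is_filter_neq0 hp); rewrite -(setICr A).
exact: is_filterI.
Qed.

Lemma ultrafilter_maximal p q : is_ultrafilter p -> is_ultrafilter q ->
  p `<=` q -> p = q.
Proof.
move=> Up Uq pq; apply/seteqP; split => // A qA.
apply: contrapT => /(ultrafilterC A Up)/pq.
by move/(ultrafilterC A Uq).
Qed.

Lemma Fbar_filter G p : Fbar G p -> is_filter p. Proof. by case=> [[]]. Qed.

Lemma Fbar_sub G H p : G `<=` H -> Fbar H p -> Fbar G p.
Proof. by move=> GH [Up Hp]; split => // A /GH/Hp. Qed.

Lemma exists_ultrafilter G : is_filter G -> exists p, Fbar G p.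
Proof.
move=> /is_filter_proper/ultraFilterLemma [p [Up Gp]].
exists p; split => //; split; last by move=> A; apply: in_ultra_setVsetC.
split; [exact: filterT | exact: filter_not_empty |
        by move=> A B; apply: filterI | by move=> A B; apply: filterS].
Qed.

Lemma exists_Fbar_containing G (Z : set (set S)) : is_filter G -> Z setT ->
  (forall A B, Z A -> Z B -> Z (A `&` B)) ->
  (forall A B, G A -> Z B -> A `&` B !=set0) ->
  exists p, Fbar G p /\ Z `<=` p.
Proof.
move=> hG ZT ZI GZ.
pose H := [set C | exists A B, [/\ G A, Z B & A `&` B `<=` C]].
have hH : is_filter H.
  split.
  - by exists setT, setT; split => //; apply: is_filterT.
  - by move=> [A [B [GA ZB AB0]]]; case: (GZ _ _ GA ZB) => w /AB0.
  - move=> C C' [A [B [GA ZB ABC]]] [A' [B' [GA' ZB' ABC']]].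
    exists (A `&` A'), (B `&` B'); split; [exact: is_filterI | exact: ZI |].
    by move=> w [[? ?] [? ?]]; split; [apply: ABC | apply: ABC'].
  - move=> C C' CC' [A [B [GA ZB ABC]]]; exists A, B; split => //.
    exact: subset_trans CC'.
have [p [Up Hp]] := exists_ultrafilter hH.
exists p; split; [split=> // A GA | move=> B ZB]; apply: Hp.
- by exists A, setT; split => //; apply: subIsetl.
- by exists setT, B; split; [apply: is_filterT | | apply: subIsetr].
Qed.

Lemma exists_Fbar_in G Z : is_filter G -> (forall A, G A -> A `&` Z !=set0) ->
  exists p, Fbar G p /\ p Z.
Proof.
move=> hG GZ.
have [|||p [Gp Zp]] := @exists_Fbar_containing G [set C | Z `<=` C] hG.
- by [].
- by move=> A B ZA ZB w Zw; split; [apply: ZA | apply: ZB].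
- by move=> A B GA ZB; case: (GZ A GA) => w [Aw /ZB Bw]; exists w.
by exists p; split => //; apply: Zp.
Qed.

Lemma Fbar_filter_mem G A : is_filter G -> (forall p, Fbar G p -> p A) -> G A.
Proof.
move=> hG GA; apply: contrapT => nGA.
have [|p [[Up Gp] pnA]] := @exists_Fbar_in G (~` A) hG.
  move=> E GE; apply/set0P/negP => /eqP EnA0; apply: nGA.
  apply: is_filterS hG _ GE => w Ew; apply: contrapT => nAw.
  by have : (E `&` ~` A) w by []; rewrite EnA0.
by move/(ultrafilterC A Up): pnA; apply; apply: GA.
Qed.

Definition meet_filter (Q : set (set (set S))) : set (set S) :=
  [set A | forall q, Q q -> q A].

Lemma meet_filter_filter Q : Q `<=` @is_filter S -> Q !=set0 ->
  is_filter (meet_filter Q).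
Proof.
move=> QF [q0 Qq0]; split.
- by move=> q /QF /is_filterT.
- by move=> h; apply: (is_filter_neq0 (QF _ Qq0)); apply: h.
- by move=> A B hA hB q Qq; apply: is_filterI (QF _ Qq) (hA q Qq) (hB q Qq).
- by move=> A B AB hA q Qq; apply: is_filterS (QF _ Qq) AB (hA q Qq).
Qed.

Definition maximal_filter (P : set (set (set S))) H :=
  [/\ is_filter H, P H & forall H', is_filter H' -> P H' -> H `<=` H' -> H' `<=` H].

Lemma bigcup_chain_filter (C : set (set (set S))) : C `<=` @is_filter S ->
  C !=set0 -> total_on C subset -> is_filter (\bigcup_(X in C) X).
Proof.
move=> CF [X0 CX0] Ctot; split.
- by exists X0 => //; apply: is_filterT (CF _ CX0).
- by move=> [X CX]; apply: is_filter_neq0 (CF _ CX).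
- move=> A B [X CX XA] [Y CY YB].
  have [XY|YX] := Ctot _ _ CX CY.
    by exists Y => //; apply: is_filterI (CF _ CY) (XY _ XA) YB.
  by exists X => //; apply: is_filterI (CF _ CX) XA (YX _ YB).
- by move=> A B AB [X CX XA]; exists X => //; apply: is_filterS (CF _ CX) AB XA.
Qed.

Lemma Fbar_bigcup (C : set (set (set S))) X p :
  C X -> Fbar (\bigcup_(Y in C) Y) p -> Fbar X p.
Proof. by move=> CX; apply: Fbar_sub => A XA; exists X. Qed.

Lemma exists_maximal_filter (P : set (set (set S))) H0 : is_filter H0 -> P H0 ->
  (forall C, C `<=` @is_filter S `&` P -> C !=set0 -> total_on C subset ->
     P (\bigcup_(X in C) X)) ->
  exists2 H, H0 `<=` H & maximal_filter P H.
Proof.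
move=> hH0 PH0 Pchain.
(* [set0] is added so that the empty chain has an upper bound for [Zorn_bigcup]. *)
pose P' := [set H | H = set0 \/ [/\ is_filter H, P H & H0 `<=` H]].
have [|H [P'H Hmax]] := @Zorn_bigcup _ P'.
  move=> C CP' Ctot.
  pose C' := C `&` [set H | [/\ is_filter H, P H & H0 `<=` H]].
  have CC' : \bigcup_(X in C) X = \bigcup_(X in C') X.
    apply/seteqP; split => A [X CX XA]; last by exists X => //; case: CX.
    by case: (CP' _ CX) => [X0|hX]; [rewrite X0 in XA | exists X].
  have [[X C'X]|C'0] := pselect (C' !=set0); last first.
    left; rewrite CC'; apply/seteqP; split => // A [X C'X _].
    by apply: C'0; exists X.
  have C'F : C' `<=` @is_filter S `&` P by move=> Y [_ []].
  have C'tot : total_on C' subset by move=> Y Y' [CY _] [CY' _]; apply: Ctot.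
  right; rewrite CC'; split.
  - by apply: bigcup_chain_filter C'tot; [move=> Y /C'F [] | exists X].
  - by apply: Pchain => //; exists X.
  - by move=> A H0A; exists X => //; case: C'X => _ [_ _]; apply.
have [H0'|[hH PH H0H]] := P'H.
  exfalso; apply: (Hmax H0); last by right; split.
  rewrite H0'; split; first by move=> ? [].
  by move=> /(_ setT (is_filterT hH0)).
exists H => //; split => // H' hH' PH' HH'.
apply: contrapT => nH'H; apply: (Hmax H'); first by split.
by right; split => //; apply: subset_trans HH'.
Qed.

End Filters.

Section Semigroup.
Variables (S : Type) (op : S -> S -> S).
Hypothesis op_assoc : associative op.
Implicit Types (G H p q r : set (set S)) (A B Z : set S).

Lemma linvA x y A : linv op y (linv op x A) = linv op (op x y) A.
Proof. by apply/seteqP; split => w; rewrite /linv /= op_assoc. Qed.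

Lemma uprodA p q r : uprod op p (uprod op q r) = uprod op (uprod op p q) r.
Proof.
rewrite /uprod /=; apply/seteqP; split => A /=;
  congr (p _); apply/seteqP; split => x /=; congr (q _);
  apply/seteqP; split => y /=; by rewrite linvA.
Qed.

Definition lquo q A := [set x | q (linv op x A)].

(* [mul_filter G q] is the filter of the closed set [Fbar G * q];
   in particular [uprod op p q = mul_filter p q]. *)
Definition mul_filter G q := [set A | G (lquo q A)].

Lemma lquoS q A B : is_filter q -> A `<=` B -> lquo q A `<=` lquo q B.
Proof. by move=> hq AB x /=; apply: is_filterS hq _ => y /AB. Qed.

Lemma lquoC q A : is_ultrafilter q -> lquo q (~` A) = ~` lquo q A.
Proof.
move=> Uq; have linvC x : linv op x (~` A) = ~` linv op x A by apply/seteqP; split.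
by apply/seteqP; split => x; rewrite /lquo /= linvC => /(ultrafilterC _ Uq).
Qed.

Lemma mul_filter_filter G q : is_filter G -> is_filter q -> is_filter (mul_filter G q).
Proof.
move=> hG hq; split.
- apply: is_filterS hG _ (is_filterT hG) => x _.
  exact: is_filterS hq _ (is_filterT hq).
- move=> Gq0; apply: (is_filter_neq0 hG); apply: is_filterS hG _ Gq0 => x q0.
  by apply: (is_filter_neq0 hq); apply: is_filterS hq _ q0.
- move=> A B GA GB; rewrite /mul_filter /= in GA GB *.
  apply: is_filterS hG _ (is_filterI hG GA GB) => x [qA qB].
  exact: is_filterI.
- by move=> A B AB; apply: (is_filterS hG); apply: lquoS.
Qed.

Lemma uprod_ultrafilter p q : is_ultrafilter p -> is_ultrafilter q ->
  is_ultrafilter (uprod op p q).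
Proof.
move=> [hp pC] Uq; split; first exact: mul_filter_filter (ultrafilter_filter Uq).
move=> A; case: (pC (lquo q A)) => [pA | pnA]; [left | right] => //.
by change (p (lquo q (~` A))); rewrite lquoC.
Qed.

Lemma sub_mul_filter G H p : is_filter G ->
  (forall q, Fbar G q -> Fbar H (uprod op q p)) -> H `<=` mul_filter G p.
Proof. by move=> hG GpH A HA; apply: Fbar_filter_mem hG _ => q /GpH [_]; apply. Qed.

Lemma Fbar_mul_filter G p r : is_filter G -> is_ultrafilter p ->
  Fbar (mul_filter G p) r <-> exists2 q, Fbar G q & uprod op q p = r.
Proof.
move=> hG Up; split; last first.
  by move=> [q [Uq Gq] <-]; split; [apply: uprod_ultrafilter | move=> A /Gq].
move=> [Ur Gr].
have hp := ultrafilter_filter Up.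
pose Z := [set C | exists2 A, r A & lquo p A `<=` C].
have [|||q [[Uq Gq] Zq]] := @exists_Fbar_containing _ G Z hG.
- by exists setT => //; apply: is_filterT (ultrafilter_filter Ur).
- move=> C C' [A rA AC] [A' rA' AC']; exists (A `&` A').
    exact: is_filterI (ultrafilter_filter Ur) rA rA'.
  by move=> x qAA'; split; [apply: AC | apply: AC'];
     apply: lquoS hp _ x qAA' => y [].
- move=> E C GE [A rA AC]; apply/set0P/negP => /eqP EC0.
  suff : r (~` A) by move/(ultrafilterC A Ur).
  apply: Gr; apply: is_filterS hG _ GE => x Ex; rewrite /= lquoC // => pA.
  have : (E `&` C) x by split => //; apply: AC.
  by rewrite EC0.
exists q => //; apply/esym/ultrafilter_maximal => //.
  exact: uprod_ultrafilter.
by move=> A rA; apply: Zq; exists A.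
Qed.

Section Ellis.
Variable H : set (set S).
Hypothesis H_min : maximal_filter (Fbar_subsemigroup op) H.

Lemma minimal_subsemigroup_mulr p : Fbar H p -> exists2 q, Fbar H q & uprod op q p = p.
Proof.
case: H_min => hH Hsemi Hmax [Up Hp].
have H_Hp : H `<=` mul_filter H p.
  by apply: sub_mul_filter => // q Hq; apply: (Hsemi _ _ Hq).
have Hp_semi : Fbar_subsemigroup op (mul_filter H p).
  move=> r r' /(Fbar_mul_filter _ hH Up) [q Hq <-] /(Fbar_mul_filter _ hH Up) [q' Hq' <-].
  apply/(Fbar_mul_filter _ hH Up); exists (uprod op (uprod op q p) q').
    exact: Hsemi (Hsemi _ _ Hq (conj Up Hp)) Hq'.
  by rewrite !uprodA.
have Hp_H := Hmax _ (mul_filter_filter hH (ultrafilter_filter Up)) Hp_semi H_Hp.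
by apply/(Fbar_mul_filter _ hH Up); split => // A /Hp_H /Hp.
Qed.

Lemma minimal_subsemigroup_idem p : Fbar H p -> uprod op p p = p.
Proof.
case: (H_min) => hH Hsemi Hmax Hp.
(* The stabiliser [Q] of [p] is a closed subsemigroup, nonempty by
   [minimal_subsemigroup_mulr]; minimality puts [p] in it. *)
pose Q := [set q | Fbar H q /\ uprod op q p = p].
have hQ : is_filter (meet_filter Q).
  apply: meet_filter_filter; first by move=> q [[/ultrafilter_filter]].
  by have [q Hq qp] := minimal_subsemigroup_mulr Hp; exists q.
have H_Q : H `<=` meet_filter Q by move=> A HA q [[_ Hq] _]; apply: Hq.
have Q_fix r : Fbar (meet_filter Q) r -> uprod op r p = p.
  move=> [Ur Qr]; apply/esym/ultrafilter_maximal; [by case: Hp | | ].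
    by apply: uprod_ultrafilter => //; case: Hp.
  by move=> A pA; apply: Qr => q [_ qp]; move: pA; rewrite -{1}qp.
have Q_semi : Fbar_subsemigroup op (meet_filter Q).
  move=> r r' Qr Qr'; split; first by apply: uprod_ultrafilter; [case: Qr | case: Qr'].
  move=> A QA; apply: QA; split.
    by apply: Hsemi; apply: Fbar_sub H_Q _.
  by rewrite -uprodA (Q_fix _ Qr') (Q_fix _ Qr).
apply: Q_fix; apply: Fbar_sub Hp.
exact: Hmax.
Qed.

End Ellis.

Lemma Ellis_idempotent H : is_filter H -> Fbar_subsemigroup op H ->
  exists2 e, Fbar H e & uprod op e e = e.
Proof.
move=> hH Hsemi.
have [|Hm HHm Hm_min] := @exists_maximal_filter _ (Fbar_subsemigroup op) H hH Hsemi.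
  move=> C CP _ _ p q Cp Cq; split.
    by apply: uprod_ultrafilter; [case: Cp | case: Cq].
  move=> A [X CX XA]; have [_ Xsemi] := CP _ CX.
  by case: (Xsemi p q (Fbar_bigcup CX Cp) (Fbar_bigcup CX Cq)) => _; apply.
case: (Hm_min) => hHm _ _.
have [e He] := exists_ultrafilter hHm.
exists e; first exact: Fbar_sub HHm He.
exact: minimal_subsemigroup_idem Hm_min _ He.
Qed.

Variable F : set (set S).
Hypotheses (hF : is_filter F) (F_semi : Fbar_subsemigroup op F).

Definition left_ideal H := forall q r, Fbar F q -> Fbar H r -> Fbar H (uprod op q r).

Definition minimal_left_ideal H :=
  [/\ is_filter H, F `<=` H, left_ideal H &
      forall l r, Fbar H l -> Fbar H r -> exists2 c, Fbar F c & uprod op c l = r].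

Lemma mul_filter_left_ideal l : is_ultrafilter l -> left_ideal (mul_filter F l).
Proof.
move=> Ul q r Fq /(Fbar_mul_filter _ hF Ul) [c Fc <-].
apply/(Fbar_mul_filter _ hF Ul); exists (uprod op q c); first exact: F_semi.
by rewrite uprodA.
Qed.

Lemma left_ideal_sub_mul_filter H l : left_ideal H -> Fbar H l -> H `<=` mul_filter F l.
Proof. by move=> Hideal Hl; apply: sub_mul_filter => // q Fq; apply: Hideal. Qed.

Lemma exists_minimal_left_ideal l0 : Fbar F l0 ->
  exists2 H, mul_filter F l0 `<=` H & minimal_left_ideal H.
Proof.
move=> Fl0; have Ul0 := proj1 Fl0.
have [|H l0H [hH Hideal Hmax]] := exists_maximal_filter
  (mul_filter_filter hF (ultrafilter_filter Ul0)) (mul_filter_left_ideal Ul0).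
- move=> C CP _ _ q r Fq Cr; split.
    by apply: uprod_ultrafilter; [case: Fq | case: Cr].
  move=> A [X CX XA]; have [_ Xideal] := CP _ CX.
  by case: (Xideal q r Fq (Fbar_bigcup CX Cr)) => _; apply.
exists H => //; split => //.
  apply: subset_trans l0H; apply: sub_mul_filter => // q Fq.
  exact: F_semi.
move=> l r Hl Hr.
have := Hmax _ (mul_filter_filter hF (Fbar_filter Hl)).
move=> /(_ (mul_filter_left_ideal (proj1 Hl)) (left_ideal_sub_mul_filter Hideal Hl)) lH.
by apply/(Fbar_mul_filter _ hF (proj1 Hl)); apply: Fbar_sub lH Hr.
Qed.

Lemma minimal_left_ideal_in_K H u : minimal_left_ideal H -> Fbar H u -> in_K_Fbar op F u.
Proof.
move=> [hH FH Hideal Hmin] Hu I [IF [i Ii] I_left I_right].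
have [l Hl] := exists_ultrafilter hH.
have Hil : Fbar H (uprod op i l) by apply: Hideal => //; apply: IF.
have [c Fc <-] := Hmin _ _ Hil Hu.
by apply: I_left => //; apply: I_right => //; apply: Fbar_sub FH Hl.
Qed.

Lemma in_K_idempotent_absorb p : Fbar F p -> in_K_Fbar op F p -> uprod op p p = p ->
  forall r, Fbar F r -> exists2 c, Fbar F c & uprod op (uprod op c r) p = p.
Proof.
move=> Fp Kp pp r Fr.
have [H _ [hH FH Hideal Hmin]] := exists_minimal_left_ideal Fp.
pose I := [set z | exists l b, [/\ Fbar H l, Fbar F b & z = uprod op l b]].
have [l [b [Hl Fb pE]]] : I p.
  apply: Kp; split.
  - by move=> _ [l [b [Hl Fb ->]]]; apply: F_semi => //; apply: Fbar_sub FH Hl.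
  - have [l Hl] := exists_ultrafilter hH; exists (uprod op l p), l, p; split => //.
  - move=> a _ Fa [l [b [Hl Fb ->]]]; exists (uprod op a l), b; split => //.
      exact: Hideal.
    by rewrite uprodA.
  - move=> _ b' [l [b [Hl Fb ->]]] Fb'; exists l, (uprod op b b'); split => //.
      exact: F_semi.
    by rewrite uprodA.
(* [p = l1 b] with [l1 := p l] in the minimal left ideal, and [l1 = c r l1]
   by minimality. *)
have Hl1 : Fbar H (uprod op p l) by apply: Hideal.
have pE1 : p = uprod op (uprod op p l) b by rewrite -uprodA -pE pp.
have [c Fc crl1] := Hmin _ _ (Hideal _ _ Fr Hl1) Hl1.
exists c => //.
by rewrite [in LHS]pE1 uprodA -[uprod op (uprod op c r) _]uprodA crl1 -pE1.
Qed.

Lemma ultrafilter_setlinv q (D : set S) A : finite_set D -> is_ultrafilter q ->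
  q (setlinv op D A) -> exists2 t, D t & q (linv op t A).
Proof.
move=> /(@finite_seqP {classic S}) [s ->] Uq; have hq := ultrafilter_filter Uq.
elim: s => [|a s IHs] /= qDA.
  by exfalso; apply: (is_filter_neq0 hq); apply: is_filterS hq _ qDA => y [].
have [qa|nqa] := pselect (q (linv op a A)); first by exists a => //=; rewrite inE eqxx.
have [|t st qt] := IHs; last by exists t => //=; rewrite inE st orbT.
apply: is_filterS hq _ (is_filterI hq qDA (proj2 (ultrafilterC _ Uq) nqa)).
by move=> y [[t /= /[!inE] /orP [/eqP -> //| st] Aty] nAay]; exists t.
Qed.

Lemma F_syndeticP A : F_syndetic op F A <->
  forall r E, Fbar F r -> F E -> exists2 t, E t & r (linv op t A).
Proof.
split.
  move=> Asynd r E [Ur Fr] FE; have [D [finD DE FDA]] := Asynd E FE.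
  have [t Dt rt] := ultrafilter_setlinv finD Ur (Fr _ FDA).
  by exists t => //; apply: DE.
move=> Aret E FE; apply: contrapT => nsynd.
pose Z := [set C | exists D, [/\ finite_set D, D `<=` E & ~` setlinv op D A `<=` C]].
have [|||r [Fr Zr]] := @exists_Fbar_containing _ F Z hF.
- by exists set0; split => //; exact: finite_set0.
- move=> C C' [D [finD DE DC]] [D' [finD' DE' DC']].
  exists (D `|` D'); split; first by rewrite finite_setU.
    by move=> t [/DE|/DE'].
  by move=> y nDD'y; split; [apply: DC | apply: DC'] => -[t Dt Aty];
     apply: nDD'y; exists t => //; [left | right].
- move=> E' C FE' [D [finD DE DC]]; apply: contrapT => E'C0.
  apply: nsynd; exists D; split => //.
  apply: is_filterS hF _ FE' => y E'y; apply: contrapT => nDAy.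
  by apply: E'C0; exists y; split => //; apply: DC.
have [t Et rt] := Aret r E Fr FE.
have : r (~` setlinv op [set t] A).
  by apply: Zr; exists [set t]; split; [exact: finite_set1 | move=> _ -> |].
move/(ultrafilterC _ (proj1 Fr)); apply.
by apply: is_filterS (Fbar_filter Fr) _ rt => y Aty; exists t.
Qed.

Lemma F_syndetic_uprod A q : F_syndetic op F A -> Fbar F q ->
  exists2 r, Fbar F r & uprod op r q A.
Proof.
move=> /F_syndeticP Asynd Fq.
have [|r [Fr rA]] := @exists_Fbar_in _ F (lquo q A) hF; last by exists r.
by move=> E FE; have [t Et qt] := Asynd q E Fq FE; exists t.
Qed.

End Semigroup.

Section UltrafilterLimits.
Variables (S : Type) (X : topologicalType).
Implicit Types (q : set (set S)) (f : S -> X).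

Definition ulimit q f (c : X) := forall W, nbhs c W -> q (f @^-1` W).

Lemma ulimit_exists q f : compact [set: X] -> is_ultrafilter q -> exists c, ulimit q f c.
Proof.
move=> Xcompact Uq; have hq := ultrafilter_filter Uq.
have [c [_ fq_c]] :=
  Xcompact _ (fmap_proper_filter f (is_filter_proper hq)) (is_filterT hq).
exists c => W cW; apply: contrapT => nqW.
have [w [nWw Ww]] := fq_c (~` W) W (proj2 (ultrafilterC _ Uq) nqW) cW.
exact: nWw.
Qed.

Lemma ulimit_unique q f c d : hausdorff_space X -> is_filter q ->
  ulimit q f c -> ulimit q f d -> c = d.
Proof.
move=> Xhausdorff hq qc qd; apply: Xhausdorff => A B cA dB.
have [s [As Bs]] := is_filter_meet hq (qc _ cA) (qd _ dB).
by exists (f s).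
Qed.

End UltrafilterLimits.

Lemma diag_nbhsI (X : topologicalType) (V V' : set (X * X)) :
  diag_nbhs V -> diag_nbhs V' -> diag_nbhs (V `&` V').
Proof.
move=> [O [oO Odiag OV]] [O' [oO' O'diag O'V']].
exists (O `&` O'); split; [exact: openI | by move=> z; split |].
by move=> z [/OV ? /O'V' ?].
Qed.

Lemma diag_nbhs_separate (X : topologicalType) (a b : X) :
  compact [set: X] -> hausdorff_space X -> a <> b ->
  exists V A B, [/\ diag_nbhs V, nbhs a A, nbhs b B &
                    forall u v, A u -> B v -> ~ V (u, v)].
Proof.
move=> Xcompact Xhausdorff ab; move: (Xhausdorff); rewrite open_hausdorff.
move=> /(_ a b (introN eqP ab)) [[A1 B1] [/= /set_mem aA1 /set_mem bB1]].
move=> [oA1 oB1 /eqP A1B1].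
have [A aA clA] := compact_regular Xhausdorff Xcompact (@filterT _ (nbhs a) _)
  (open_nbhs_nbhs (conj oA1 aA1)).
have [B bB clB] := compact_regular Xhausdorff Xcompact (@filterT _ (nbhs b) _)
  (open_nbhs_nbhs (conj oB1 bB1)).
(* [V] must be open, hence the closures; regularity keeps them inside [A1] and [B1]. *)
pose V := [set z : X * X | ~ closure A z.1 \/ ~ closure B z.2].
exists V, A, B; split => //; last first.
  by move=> u v Au Bv [] []; apply: subset_closure.
exists V; split => //.
- rewrite openE => z [nz|nz].
    exists (~` closure A, setT) => /=; last by move=> w [/= ? _]; left.
    split; last exact: filterT.
    by apply: open_nbhs_nbhs; split => //; rewrite openC; exact: closed_closure.
  exists (setT, ~` closure B) => /=; last by move=> w [/= _ ?]; right.
  split; first exact: filterT.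
  by apply: open_nbhs_nbhs; split => //; rewrite openC; exact: closed_closure.
- move=> w; apply: contrapT => /not_orP [/contrapT wA /contrapT wB].
  have : (A1 `&` B1) w by split; [apply: clA | apply: clB].
  by rewrite A1B1.
Qed.

Section Dynamics.
Variables (S : Type) (op : S -> S -> S).
Hypothesis op_assoc : associative op.
Variables (X : topologicalType) (T : S -> X -> X).
Hypothesis T_system : dynamical_system op T.
Variable F : set (set S).
Hypothesis hF : is_filter F.
Implicit Types (p q r : set (set S)).

Lemma ulimit_uprod p q z c d : is_filter p -> is_filter q ->
  ulimit q (T^~ z) c -> ulimit p (T^~ c) d -> ulimit (uprod op p q) (T^~ z) d.
Proof.
case: T_system => _ _ T_cont T_mul hp hq qc pd W; rewrite nbhsE => -[O [oO Od] OW].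
apply: is_filterS hp _ (pd _ (open_nbhs_nbhs (conj oO Od))) => t /= Otc.
apply: is_filterS hq _ (qc _ (T_cont t c O (open_nbhs_nbhs (conj oO Otc)))).
by move=> s /= Os; apply: OW; rewrite /linv /= -T_mul.
Qed.

Lemma ulimit_idem p z y : is_ultrafilter p -> uprod op p p = p ->
  ulimit p (T^~ z) y -> ulimit p (T^~ y) y.
Proof.
case: (T_system) => Xcompact Xhausdorff _ _ Up pp pzy.
have hp := ultrafilter_filter Up.
have [y' pyy'] := ulimit_exists (T^~ y) Xcompact Up.
suff yy' : y = y' by rewrite [X in ulimit _ _ X]yy'.
have pzy' : ulimit p (T^~ z) y'.
  by rewrite -[X in ulimit X]pp; exact: (ulimit_uprod hp hp pzy pyy').
exact: ulimit_unique Xhausdorff hp pzy pzy'.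
Qed.

Lemma ulimit_proximal p x y : Fbar F p -> ulimit p (T^~ x) y -> ulimit p (T^~ y) y ->
  F_proximal F T x y.
Proof.
move=> [Up Fp] pxy pyy V E [O [oO Odiag OV]] FE.
have hp := ultrafilter_filter Up.
have [[Q R] [/= yQ yR] QRO] : nbhs (y, y) O by apply: open_nbhs_nbhs.
have [s [[Es Qs] Rs]] :=
  is_filter_meet hp (is_filterI hp (Fp _ FE) (pxy _ yQ)) (pyy _ yR).
by exists s => //; apply/OV/QRO.
Qed.

Lemma proximal_common_ulimit x y : F_proximal F T x y ->
  exists p c, [/\ Fbar F p, ulimit p (T^~ x) c & ulimit p (T^~ y) c].
Proof.
case: (T_system) => Xcompact Xhausdorff _ _ xy_prox.
pose Z := [set C | exists2 V, diag_nbhs V & [set s | V (T s x, T s y)] `<=` C].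
have [|||p [[Up Fp] Zp]] := @exists_Fbar_containing _ F Z hF.
- by exists setT => //; exists setT; split => //; exact: openT.
- move=> C C' [V dV VC] [V' dV' V'C']; exists (V `&` V'); first exact: diag_nbhsI.
  by move=> s [? ?]; split; [apply: VC | apply: V'C'].
- move=> E C FE [V dV VC]; have [s Es Vs] := xy_prox V E dV FE.
  by exists s; split => //; apply: VC.
have hp := ultrafilter_filter Up.
have [a pa] := ulimit_exists (T^~ x) Xcompact Up.
have [b pb] := ulimit_exists (T^~ y) Xcompact Up.
exists p, a; split => //; suff -> : a = b by [].
apply: contrapT => ab.
have [V [A [B [dV aA bB ABV]]]] := diag_nbhs_separate Xcompact Xhausdorff ab.
have pV : p [set s | V (T s x, T s y)] by apply: Zp; exists V.
have [s [[Vs As] Bs]] := is_filter_meet hp (is_filterI hp pV (pa _ aA)) (pb _ bB).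
exact: ABV As Bs Vs.
Qed.

Lemma uniformly_recurrent_return H y : minimal_left_ideal op F H ->
  F_uniformly_recurrent op F T y -> exists2 v, Fbar H v & ulimit v (T^~ y) y.
Proof.
move=> [hH FH Hideal _] yrec.
pose Z := [set C | exists2 W, nbhs y W & [set s | W (T s y)] `<=` C].
have [|||v [Hv Zv]] := @exists_Fbar_containing _ H Z hH.
- by exists setT => //; exact: filterT.
- move=> C C' [W yW WC] [W' yW' W'C']; exists (W `&` W'); first exact: filterI.
  by move=> s [? ?]; split; [apply: WC | apply: W'C'].
- move=> E C HE [W yW WC].
  have [l Hl] := exists_ultrafilter hH.
  have [r Fr rlW] := F_syndetic_uprod hF (yrec W yW) (Fbar_sub FH Hl).
  have [[hrl _] Hrl] := Hideal _ _ Fr Hl.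
  have [s [Es Ws]] := is_filter_meet hrl (Hrl _ HE) rlW.
  by exists s; split => //; apply: WC.
by exists v => // W yW; apply: Zv; exists W.
Qed.

Lemma uniformly_recurrent_idempotent H y : minimal_left_ideal op F H ->
  F_uniformly_recurrent op F T y ->
  exists u, [/\ Fbar H u, uprod op u u = u & ulimit u (T^~ y) y].
Proof.
move=> Hmin yrec; case: (Hmin) => hH FH Hideal _.
pose Q := [set r | Fbar H r /\ ulimit r (T^~ y) y].
have hQ : is_filter (meet_filter Q).
  apply: meet_filter_filter; first by move=> r [[/ultrafilter_filter]].
  by have [v Hv vy] := uniformly_recurrent_return Hmin yrec; exists v.
have Q_closed r : Fbar (meet_filter Q) r -> Q r.
  move=> Qr; split; first by apply: Fbar_sub Qr => A HA q [[_ Hq] _]; apply: Hq.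
  by move=> W yW; apply: (proj2 Qr) => q [_]; apply.
have Q_semi : Fbar_subsemigroup op (meet_filter Q).
  move=> r r' /Q_closed [Hr ry] /Q_closed [Hr' r'y]; split.
    by apply: uprod_ultrafilter; [case: Hr | case: Hr'].
  move=> A QA; apply: QA; split; first by apply: Hideal => //; apply: Fbar_sub FH Hr.
  exact: ulimit_uprod (Fbar_filter Hr) (Fbar_filter Hr') r'y ry.
have [u Qu uu] := Ellis_idempotent op_assoc hQ Q_semi.
by have [Hu uy] := Q_closed _ Qu; exists u.
Qed.

Hypothesis F_semi : Fbar_subsemigroup op F.

Lemma in_K_uniformly_recurrent p y : Fbar F p -> in_K_Fbar op F p ->
  uprod op p p = p -> ulimit p (T^~ y) y -> F_uniformly_recurrent op F T y.
Proof.
case: (T_system) => Xcompact Xhausdorff _ _ Fp Kp pp pyy W yW.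
apply/(F_syndeticP _ hF) => r E Fr FE.
have [c Fc crp] := in_K_idempotent_absorb op_assoc hF F_semi Fp Kp pp Fr.
have Ucr := uprod_ultrafilter op (proj1 Fc) (proj1 Fr).
have [d crd] := ulimit_exists (T^~ y) Xcompact Ucr.
have dy : d = y.
  apply: (ulimit_unique Xhausdorff (Fbar_filter Fp) _ pyy).
  rewrite -[X in ulimit X]crp.
  exact: (ulimit_uprod (ultrafilter_filter Ucr) (Fbar_filter Fp) pyy crd).
rewrite dy in crd.
have [t [Et rt]] := is_filter_meet (Fbar_filter Fc) (proj2 Fc _ FE) (crd _ yW).
by exists t.
Qed.

Lemma proximal_recurrent_central x y U : nbhs y U -> F_proximal F T x y ->
  F_uniformly_recurrent op F T y -> F_central op F [set s | U (T s x)].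
Proof.
case: (T_system) => Xcompact Xhausdorff _ _ yU xy_prox yrec.
have [p [c [Fp pxc pyc]]] := proximal_common_ulimit xy_prox.
have [H pH Hmin] := exists_minimal_left_ideal op_assoc hF F_semi Fp.
have [u [Hu uu uy]] := uniformly_recurrent_idempotent Hmin yrec.
have [w Fw wp] := (Fbar_mul_filter _ _ hF (proj1 Fp)).1 (Fbar_sub pH Hu).
have [d wcd] := ulimit_exists (T^~ c) Xcompact (proj1 Fw).
(* [u = w p] sends every [z] to the [w]-limit of the [p]-limit of [z]. *)
have u_lim z : ulimit p (T^~ z) c -> ulimit u (T^~ z) d.
  by rewrite -wp => pzc; exact: (ulimit_uprod (Fbar_filter Fw) (Fbar_filter Fp) pzc wcd).
have dy : d = y.
  exact: ulimit_unique Xhausdorff (Fbar_filter Hu) (u_lim _ pyc) uy.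
exists u; split => //.
- by case: Hmin => _ FH _ _; apply: Fbar_sub FH Hu.
- exact: minimal_left_ideal_in_K Hmin Hu.
- by apply: (u_lim _ pxc); rewrite dy.
Qed.

End Dynamics.

Lemma continuous_prod_topology (I : Type) (Y : topologicalType) (K : I -> topologicalType)
  (f : Y -> prod_topology K) : (forall i, continuous (f^~ i)) -> continuous f.
Proof.
move=> f_cont y; apply/cvg_sup => i U [? /= [[W oW <-]]] /= Wfy /filterS; apply.
by apply: f_cont; apply: open_nbhs_nbhs.
Qed.

Section Shift.
Variables (S : Type) (op : S -> S -> S).
Hypothesis op_assoc : associative op.

(* [None] plays the role of an identity adjoined to [S]. *)
Definition shift_space : topologicalType :=
  prod_topology (fun _ : {classic (option S)} => bool).

Definition oshift (u : option S) (s : S) : option S :=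
  if u is Some t then Some (op t s) else Some s.

Definition shift (s : S) (f : shift_space) : shift_space := fun u => f (oshift u s).

Lemma shift_system : dynamical_system op shift.
Proof.
split.
- have := @tychonoff _ (fun _ : {classic (option S)} => bool) (fun=> setT)
    (fun=> bool_compact).
  by congr (compact _); rewrite eqEsubset.
- by apply: hausdorff_product => ?; apply: discrete_hausdorff.
- move=> s; apply: continuous_prod_topology => u.
  exact: (@proj_continuous {classic (option S)} (fun _ => bool) (oshift u s)).
- move=> s t; apply: funext => f; apply: funext => -[w|] //=.
  by rewrite /shift /= op_assoc.
Qed.

Lemma shift_coord_nbhs (f : shift_space) u : nbhs f [set g : shift_space | g u = f u].
Proof.
apply: (@proj_continuous _ (fun _ => bool) u f [set f u]).
by rewrite nbhs_principalE; apply/principal_filterP.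
Qed.

Variable F : set (set S).
Hypotheses (hF : is_filter F) (F_semi : Fbar_subsemigroup op F).

Lemma central_proximal_recurrent B : F_central op F B ->
  exists (x y : shift_space) (U : set shift_space),
    [/\ nbhs y U, F_proximal F shift x y, F_uniformly_recurrent op F shift y
      & B = [set s | U (shift s x)]].
Proof.
move=> [p [Fp Kp pp pB]]; have Up := proj1 Fp.
case: shift_system => Xcompact _ _ _.
pose x : shift_space := fun u => if u is Some s then `[< B s >] else true.
have [y pxy] := ulimit_exists (shift^~ x) Xcompact Up.
have pyy := ulimit_idem shift_system Up pp pxy.
have y1 : y None = true.
  have [s [Bs /= <-]] :=
    is_filter_meet (Fbar_filter Fp) pB (pxy _ (shift_coord_nbhs y None)).
  exact/asboolP.
exists x, y, [set f : shift_space | f None = true]; split.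
- by rewrite -[in X in nbhs _ X]y1; apply: shift_coord_nbhs.
- exact: ulimit_proximal Fp pxy pyy.
- exact: (in_K_uniformly_recurrent op_assoc shift_system hF F_semi Fp Kp pp pyy).
- by apply/seteqP; split => s /= /asboolP.
Qed.

End Shift.

Theorem theorem5 (S : Type) (op : S -> S -> S) (op_assoc : associative op)
  (F : set (set S)) (HF : is_filter F) (Hsub : Fbar_subsemigroup op F)
  (B : set S) :
  F_central op F B <->
  exists (X : topologicalType) (T : S -> X -> X) (x y : X) (U : set X),
    [/\ dynamical_system op T, nbhs y U,
        F_proximal F T x y, F_uniformly_recurrent op F T y
      & B = [set s | U (T s x)]].
Proof.
split.
  move=> /(central_proximal_recurrent op_assoc HF Hsub) [x [y [U [yU prox rec ->]]]].
  by exists (shift_space S), (shift op), x, y, U; split => //; apply: shift_system.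
move=> [X [T [x [y [U [T_system yU prox rec ->]]]]]].
exact: (proximal_recurrent_central op_assoc T_system HF Hsub yU prox rec).
Qed.
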